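(* Let $a$ be a real number with $|a|<1$, let $n$ be a real number and $i$ a nonnegative integer, and put $\Theta(\varphi)=\dfrac{1+a^2-2a\cos\varphi}{1-a^2}$. Then $$\binom{n}{i}\int_0^{\pi}\frac{\cos(i\varphi)}{\Theta(\varphi)^{n+1}}\,d\varphi=\binom{-n-1}{i}\int_0^{\pi}\Theta(\varphi)^{n}\cos(i\varphi)\,d\varphi .$$
   Context: For a real number $m$ and a nonnegative integer $k$, $\binom{m}{k}=\frac{m(m-1)\cdots(m-k+1)}{k!}$ is the coefficient of $v^k$ in the binomial expansion of $(1+v)^m$. *)

From Stdlib Require Import Reals Arith.
From Coquelicot Require Import Coquelicot.
Open Scope R_scope.

Fixpoint falling (m : R) (k : nat) : R :=
  match k with
  | O => 1
  | S k' => falling m k' * (m - INR k')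
  end.

Definition gbinom (m : R) (k : nat) : R := falling m k / INR (Factorial.fact k).

Definition Theta (a phi : R) : R := (1 + a ^ 2 - 2 * a * cos phi) / (1 - a ^ 2).

(* Write I(s, k) for the integral over [0, pi] of Theta^s cos(k phi), where Theta = c - b cos phi
   with c = (1 + a^2) / (1 - a^2) and b = 2 a / (1 - a^2), so that c^2 - b^2 = 1.  Integrating the
   derivatives of Theta^(s+1) sin((k+1) phi) and of Theta^(s+1) sin phi over [0, pi] gives a
   three-term recurrence in k, and a three-term recurrence in s for k = 0.  The first shows that
   J_m(k) = m (m-1) ... (m-k+1) I(-m-1, k) satisfies, as a sequence in k, a recurrence that is
   invariant under m |-> -m-1; so J_n = J_(-n-1) as soon as this holds for k = 0 and k = 1.
   For k = 0 it is the identity I(-s-1, 0) = I(s, 0): the boundary map of the disc automorphism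
   z |-> (z - a) / (1 - a z) has derivative 1 / Theta and carries Theta_(-a) to 1 / Theta_a, and
   phi |-> pi - phi exchanges Theta_(-a) and Theta_a.  The case k = 1 reduces to k = 0 through
   the recurrence in s. *)

From Stdlib Require Import Reals Arith Lra Psatz.
From Coquelicot Require Import Coquelicot.
Open Scope R_scope.

Lemma RInt_of_derive (F f : R -> R) (a b : R) :
  (forall x, is_derive F x (f x)) -> (forall x, continuous f x) ->
  RInt f a b = F b - F a.
Proof.
  intros dF cf.
  apply (@is_RInt_unique R_CompleteNormedModule), (@is_RInt_derive R_CompleteNormedModule);
    intros x _; auto.
Qed.

Lemma sin_nPI (k : nat) : sin (INR k * PI) = 0.
Proof. apply sin_eq_0_1. exists (Z.of_nat k). rewrite INR_IZR_INZ. reflexivity. Qed.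

Lemma Rpower_succ (t s : R) : 0 < t -> Rpower t (s + 1) = Rpower t s * t.
Proof. intros ht. rewrite Rpower_plus, Rpower_1 by exact ht. reflexivity. Qed.

Lemma Rpower_inv_pred t s : 0 < t -> / t * Rpower (/ t) s = Rpower t (- s - 1).
Proof.
  intros ht.
  replace (Rpower (/ t) s) with (Rpower t (- s - 1 + 1))
    by (unfold Rpower; rewrite ln_Rinv by exact ht; f_equal; ring).
  rewrite Rpower_succ by exact ht. field. lra.
Qed.

Lemma cos_add_2atan x u : cos (x + 2 * atan u) = (cos x * (1 - u * u) - 2 * u * sin x) / (1 + u * u).
Proof.
  rewrite cos_plus, cos_2a, sin_2a, cos_atan, sin_atan.
  assert (Hp : 0 < 1 + u²) by (unfold Rsqr; nra).
  pose proof (sqrt_sqrt _ (Rlt_le _ _ Hp)) as Hq. pose proof (sqrt_lt_R0 _ Hp) as Hq0.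
  set (q := sqrt (1 + u²)) in *. unfold Rsqr in *.
  replace (1 / q * (1 / q) - u / q * (u / q)) with ((1 - u * u) / (q * q)) by (field; lra).
  replace (2 * (u / q) * (1 / q)) with (2 * u / (q * q)) by (field; lra).
  rewrite Hq. field. lra.
Qed.

(* The hypothesis [alpha * u 1 = 0] instead of [u 1 = 0] lets the degenerate case [alpha = 0]
   (the weight with [a = 0]) go through without a separate argument. *)
Lemma linear_rec2_eq0 (alpha : R) (beta gamma u : nat -> R) :
  (forall k, beta k <> 0) ->
  (forall k, alpha * u (S (S k)) + beta k * u (S k) = gamma k * u k) ->
  u O = 0 -> alpha * u 1%nat = 0 -> forall k, u k = 0.
Proof.
  intros beta_nz rec u0 u1.
  assert (step : forall k, u k = 0 -> u (S k) = 0 -> u (S (S k)) = 0).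
  { intros k uk uSk. destruct (Req_dec alpha 0) as [alpha0 | alpha_nz].
    - specialize (rec (S k)). rewrite alpha0, uSk in rec.
      apply (Rmult_eq_reg_l (beta (S k))); [lra | apply beta_nz].
    - specialize (rec k). rewrite uk, uSk in rec.
      apply (Rmult_eq_reg_l alpha); [lra | exact alpha_nz]. }
  assert (u1' : u 1%nat = 0).
  { destruct (Req_dec alpha 0) as [alpha0 | alpha_nz].
    - specialize (rec O). rewrite alpha0, u0 in rec.
      apply (Rmult_eq_reg_l (beta O)); [lra | apply beta_nz].
    - apply (Rmult_eq_reg_l alpha); [lra | exact alpha_nz]. }
  assert (pair : forall k, u k = 0 /\ u (S k) = 0).
  { induction k as [|k [uk uSk]]; [split; assumption | split; [| apply step]; assumption]. }
  intros k. apply pair.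
Qed.

Definition cos_weight (b c x : R) : R := c - b * cos x.

Definition weighted_cos (b c s : R) (k : nat) (x : R) : R :=
  Rpower (cos_weight b c x) s * cos (INR k * x).

Definition cos_moment (b c s : R) (k : nat) : R := RInt (weighted_cos b c s k) 0 PI.

Definition falling_moment (b c m : R) (k : nat) : R := falling m k * cos_moment b c (- m - 1) k.

Section CosineMoments.

Variables b c : R.
Hypothesis hbc : Rabs b < c.

Lemma cos_weight_pos x : 0 < cos_weight b c x.
Proof.
  unfold cos_weight. pose proof (COS_bound x). pose proof (Rle_abs b). pose proof (Rle_abs (- b)).
  rewrite Rabs_Ropp in *. nra.
Qed.

Lemma continuous_weighted_cos s k x : continuous (weighted_cos b c s k) x.
Proof.
  apply (@ex_derive_continuous R_AbsRing R_NormedModule).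
  unfold weighted_cos, Rpower, cos_weight. auto_derive. apply (cos_weight_pos x).
Qed.

Lemma cos_moment_lincomb3 (p q r s1 s2 s3 : R) (k1 k2 k3 : nat) :
  RInt (fun x => p * weighted_cos b c s1 k1 x + q * weighted_cos b c s2 k2 x
                 - r * weighted_cos b c s3 k3 x) 0 PI
  = p * cos_moment b c s1 k1 + q * cos_moment b c s2 k2 - r * cos_moment b c s3 k3.
Proof.
  assert (I_correct : forall s k, is_RInt (weighted_cos b c s k) 0 PI (cos_moment b c s k)).
  { intros s k. apply (@RInt_correct R_CompleteNormedModule).
    apply (@ex_RInt_continuous R_CompleteNormedModule).
    intros; apply continuous_weighted_cos. }
  apply (@is_RInt_unique R_CompleteNormedModule).
  apply (is_RInt_minus (V := R_NormedModule)); [apply (is_RInt_plus (V := R_NormedModule))|];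
    apply (is_RInt_scal (V := R_NormedModule)), I_correct.
Qed.

Lemma is_derive_cos_moment_rec s k x :
  is_derive (fun x => 2 * Rpower (cos_weight b c x) (s + 1) * sin (INR (S k) * x)) x
    (b * (s - INR k) * weighted_cos b c s k x + 2 * (INR k + 1) * c * weighted_cos b c s (S k) x
     - b * (s + INR k + 2) * weighted_cos b c s (S (S k)) x).
Proof.
  pose proof (cos_weight_pos x) as Tpos. unfold cos_weight in Tpos.
  unfold weighted_cos, cos_weight, Rpower. rewrite !S_INR.
  auto_derive; [lra|].
  replace (c + - (b * cos x)) with (c - b * cos x) by ring.
  set (T := c - b * cos x) in *.
  fold (Rpower T (s + 1)) (Rpower T s). rewrite Rpower_succ by exact Tpos.
  set (K := INR k + 1).
  replace (INR k) with (K - 1) by (unfold K; ring).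
  replace ((K - 1) * x) with (K * x - x) by ring.
  replace ((K + 1) * x) with (K * x + x) by ring.
  rewrite cos_plus, cos_minus. field_simplify; [|lra]. unfold T. ring.
Qed.

Lemma continuous_weighted_cos_lincomb3 (p q r s1 s2 s3 : R) (k1 k2 k3 : nat) x :
  continuous (fun x => p * weighted_cos b c s1 k1 x + q * weighted_cos b c s2 k2 x
                       - r * weighted_cos b c s3 k3 x) x.
Proof.
  apply (continuous_minus (V := R_NormedModule)); [apply (continuous_plus (V := R_NormedModule))|];
    apply (continuous_scal_r (V := R_NormedModule)), continuous_weighted_cos.
Qed.

Lemma cos_moment_rec s k :
  b * (s - INR k) * cos_moment b c s k + 2 * (INR k + 1) * c * cos_moment b c s (S k)
  - b * (s + INR k + 2) * cos_moment b c s (S (S k)) = 0.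
Proof.
  rewrite <- cos_moment_lincomb3.
  rewrite (RInt_of_derive (fun x => 2 * Rpower (cos_weight b c x) (s + 1) * sin (INR (S k) * x))).
  - rewrite Rmult_0_r, sin_0, (Rmult_comm _ PI), <- (Rmult_comm (INR (S k))), sin_nPI. ring.
  - intros x. apply is_derive_cos_moment_rec.
  - intros x. apply continuous_weighted_cos_lincomb3.
Qed.

Lemma is_derive_cos_moment0_rec s x :
  is_derive (fun x => b * Rpower (cos_weight b c x) (s + 1) * sin x) x
    (- (s + 1) * (c ^ 2 - b ^ 2) * weighted_cos b c s 0 x
     + (2 * s + 3) * c * weighted_cos b c (s + 1) 0 x
     - (s + 2) * weighted_cos b c (s + 2) 0 x).
Proof.
  pose proof (cos_weight_pos x) as Tpos. unfold cos_weight in Tpos.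
  unfold weighted_cos, cos_weight. rewrite Rmult_0_l, cos_0, !Rmult_1_r.
  replace (s + 2) with (s + 1 + 1) by ring.
  rewrite !(Rpower_succ _ (s + 1)), !(Rpower_succ _ s) by exact Tpos.
  unfold Rpower. auto_derive; [lra|].
  replace (c + - (b * cos x)) with (c - b * cos x) by ring.
  fold (Rpower (c - b * cos x) (s + 1)) (Rpower (c - b * cos x) s).
  rewrite Rpower_succ by exact Tpos.
  field_simplify; [|lra].
  replace (sin x ^ 2) with (1 - cos x ^ 2) by (rewrite <- (sin2_cos2 x); unfold Rsqr; ring).
  ring.
Qed.

Lemma cos_moment0_rec s :
  - (s + 1) * (c ^ 2 - b ^ 2) * cos_moment b c s 0 + (2 * s + 3) * c * cos_moment b c (s + 1) 0
  - (s + 2) * cos_moment b c (s + 2) 0 = 0.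
Proof.
  rewrite <- cos_moment_lincomb3.
  rewrite (RInt_of_derive (fun x => b * Rpower (cos_weight b c x) (s + 1) * sin x)).
  - rewrite sin_0, sin_PI. ring.
  - intros x. apply is_derive_cos_moment0_rec.
  - intros x. apply continuous_weighted_cos_lincomb3.
Qed.

Lemma weighted_cos_succ_pow s x :
  c * weighted_cos b c s 0 x + (- b) * weighted_cos b c s 1 x - 1 * weighted_cos b c (s + 1) 0 x = 0.
Proof.
  unfold weighted_cos. rewrite Rpower_succ by apply cos_weight_pos. unfold cos_weight. simpl INR.
  rewrite Rmult_0_l, Rmult_1_l, cos_0. ring.
Qed.

Lemma cos_moment0_succ s : cos_moment b c (s + 1) 0 = c * cos_moment b c s 0 - b * cos_moment b c s 1.
Proof.
  apply Rminus_diag_uniq_sym.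
  replace (c * cos_moment b c s 0 - b * cos_moment b c s 1 - cos_moment b c (s + 1) 0)
    with (c * cos_moment b c s 0 + (- b) * cos_moment b c s 1 - 1 * cos_moment b c (s + 1) 0) by ring.
  rewrite <- cos_moment_lincomb3, (RInt_ext _ (fun _ => 0)), RInt_const.
  - apply Rmult_0_r.
  - intros x _. apply weighted_cos_succ_pow.
Qed.

Lemma falling_moment_rec m k :
  b * falling_moment b c m (S (S k)) + 2 * (INR k + 1) * c * falling_moment b c m (S k)
  = b * (m - INR k) * (m + INR k + 1) * falling_moment b c m k.
Proof.
  pose proof (cos_moment_rec (- m - 1) k) as rec.
  unfold falling_moment. cbn [falling]. rewrite S_INR.
  apply Rminus_diag_uniq.
  match type of rec with ?L = 0 => transitivity (falling m k * (m - INR k) * L) end.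
  - ring.
  - rewrite rec. ring.
Qed.

End CosineMoments.

Lemma Theta_den_pos a : Rabs a < 1 -> 0 < 1 - a ^ 2.
Proof.
  intros ha. destruct (Rcase_abs a); [rewrite Rabs_left in ha | rewrite Rabs_right in ha]; nra.
Qed.

Lemma Theta_num_pos a x : Rabs a < 1 -> 0 < 1 + a ^ 2 - 2 * a * cos x.
Proof.
  intros ha. pose proof (COS_bound x).
  destruct (Rcase_abs a); [rewrite Rabs_left in ha | rewrite Rabs_right in ha]; nra.
Qed.

Lemma Theta_pos a x : Rabs a < 1 -> 0 < Theta a x.
Proof. intros ha. apply Rdiv_lt_0_compat; [apply Theta_num_pos | apply Theta_den_pos]; exact ha. Qed.

Lemma Theta_opp a y : Theta (- a) y = Theta a (PI - y).
Proof. unfold Theta. rewrite cos_minus, cos_PI, sin_PI. f_equal; ring. Qed.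

Lemma continuous_Theta_pow a s x : Rabs a < 1 -> continuous (fun y => Rpower (Theta a y) s) x.
Proof.
  intros ha. apply (@ex_derive_continuous R_AbsRing R_NormedModule).
  pose proof (Theta_pos a x ha) as Tpos. unfold Theta in *.
  unfold Rpower. auto_derive. exact Tpos.
Qed.

(* [moebius a] is the angle map of the disc automorphism [z |-> (z - a) / (1 - a z)]. *)
Definition moebius (a x : R) : R := x + 2 * atan (a * sin x / (1 - a * cos x)).

Lemma moebius_0 a : moebius a 0 = 0.
Proof. unfold moebius. rewrite sin_0, Rmult_0_r, Rdiv_0_l, atan_0. ring. Qed.

Lemma moebius_PI a : moebius a PI = PI.
Proof. unfold moebius. rewrite sin_PI, Rmult_0_r, Rdiv_0_l, atan_0. ring. Qed.

Section Reflection.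

Variable a : R.
Hypothesis ha : Rabs a < 1.

Lemma one_sub_a_cos_pos x : 0 < 1 - a * cos x.
Proof.
  pose proof (COS_bound x).
  destruct (Rcase_abs a); [rewrite Rabs_left in ha | rewrite Rabs_right in ha]; nra.
Qed.

Lemma Theta_moebius x : Theta (- a) (moebius a x) = / Theta a x.
Proof.
  pose proof (Theta_num_pos a x ha) as Npos. pose proof (Theta_den_pos a ha) as Dpos.
  pose proof (one_sub_a_cos_pos x) as wpos.
  unfold Theta, moebius. rewrite cos_add_2atan.
  pose proof (sin2_cos2 x) as HE. unfold Rsqr in HE.
  set (co := cos x) in *. set (si := sin x) in *. clearbody co si.
  field_simplify_eq; [| repeat split; nra ..].
  replace (si ^ 2) with (1 - co ^ 2) by nra.
  ring.
Qed.

Lemma is_derive_moebius x : is_derive (moebius a) x (/ Theta a x).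
Proof.
  pose proof (Theta_num_pos a x ha) as Npos. pose proof (Theta_den_pos a ha) as Dpos.
  pose proof (one_sub_a_cos_pos x) as wpos.
  unfold moebius. auto_derive; [lra|]. unfold Theta.
  pose proof (sin2_cos2 x) as HE. unfold Rsqr in HE.
  set (co := cos x) in *. set (si := sin x) in *. clearbody co si.
  field_simplify_eq; [| repeat split; nra ..].
  replace (si ^ 2) with (1 - co ^ 2) by nra.
  ring.
Qed.

Lemma RInt_Theta_pow_opp s :
  RInt (fun y => Rpower (Theta (- a) y) s) 0 PI = RInt (fun y => Rpower (Theta a y) s) 0 PI.
Proof.
  set (f := fun y => Rpower (Theta a y) s).
  assert (If : is_RInt f (-1 * PI + PI) (-1 * 0 + PI) (RInt f 0 PI)).
  { replace (-1 * PI + PI) with 0 by ring. replace (-1 * 0 + PI) with PI by ring.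
    apply (@RInt_correct R_CompleteNormedModule), (@ex_RInt_continuous R_CompleteNormedModule).
    intros y _. apply continuous_Theta_pow, ha. }
  set (v := RInt f 0 PI) in *.
  apply (is_RInt_comp_lin (V := R_NormedModule)), (is_RInt_swap (V := R_NormedModule)),
    (is_RInt_scal (V := R_NormedModule)) with (k := -1) in If.
  apply (@is_RInt_unique R_CompleteNormedModule).
  replace v with (scal (-1) (opp v)) by (unfold scal, opp; simpl; unfold mult; simpl; ring).
  apply (is_RInt_ext (V := R_NormedModule)) with (2 := If).
  intros y _. unfold f, scal; simpl; unfold mult; simpl.
  rewrite Theta_opp. replace (PI - y) with (-1 * y + PI) by ring. ring.
Qed.

Lemma RInt_Theta_pow_reflect s :
  RInt (fun x => Rpower (Theta a x) (- s - 1)) 0 PI = RInt (fun x => Rpower (Theta a x) s) 0 PI.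
Proof.
  rewrite <- (RInt_Theta_pow_opp s).
  assert (ha' : Rabs (- a) < 1) by (rewrite Rabs_Ropp; exact ha).
  rewrite <- (moebius_0 a), <- (moebius_PI a) at 2.
  rewrite <- (RInt_comp (V := R_CompleteNormedModule) _ (moebius a) (fun x => / Theta a x)).
  - apply RInt_ext. intros x _. unfold scal; simpl; unfold mult; simpl.
    rewrite Theta_moebius, Rpower_inv_pred by apply Theta_pos, ha. reflexivity.
  - intros x _. apply continuous_Theta_pow, ha'.
  - intros x _. split; [apply is_derive_moebius|].
    apply (continuous_Rinv_comp (Theta a)).
    + apply (@ex_derive_continuous R_AbsRing R_NormedModule).
      pose proof (Theta_den_pos a ha). unfold Theta. auto_derive. lra.
    + apply Rgt_not_eq, Theta_pos, ha.
Qed.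

End Reflection.

Section ThetaMoments.

Variable a : R.
Hypothesis ha : Rabs a < 1.

Let b := 2 * a / (1 - a ^ 2).
Let c := (1 + a ^ 2) / (1 - a ^ 2).

Lemma Theta_eq_cos_weight x : Theta a x = cos_weight b c x.
Proof. pose proof (Theta_den_pos a ha). unfold Theta, cos_weight, b, c. field. lra. Qed.

Lemma Theta_coef_hyperbola : c ^ 2 - b ^ 2 = 1.
Proof. pose proof (Theta_den_pos a ha). unfold b, c. field. lra. Qed.

Lemma Theta_coef_lt : Rabs b < c.
Proof.
  pose proof (Theta_pos a 0 ha) as T0. pose proof (Theta_pos a PI ha) as TPI.
  rewrite Theta_eq_cos_weight in T0, TPI. unfold cos_weight in T0, TPI.
  rewrite cos_0 in T0. rewrite cos_PI in TPI.
  apply Rabs_def1; lra.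
Qed.

Lemma cos_moment0_reflect s : cos_moment b c (- s - 1) 0 = cos_moment b c s 0.
Proof.
  assert (pow_Theta : forall s x, weighted_cos b c s 0 x = Rpower (Theta a x) s).
  { intros s' x. unfold weighted_cos. rewrite Theta_eq_cos_weight. simpl INR.
    rewrite Rmult_0_l, cos_0. ring. }
  unfold cos_moment.
  rewrite !(RInt_ext (weighted_cos b c _ 0) (fun x => Rpower (Theta a x) _))
    by (intros; apply pow_Theta).
  apply RInt_Theta_pow_reflect, ha.
Qed.

Lemma falling_moment_reflect m k : falling_moment b c m k = falling_moment b c (- m - 1) k.
Proof.
  pose proof Theta_coef_lt as hbc. pose proof Theta_coef_hyperbola as hyp.
  apply Rminus_diag_uniq. revert k.
  apply (linear_rec2_eq0 b (fun k => 2 * (INR k + 1) * c) (fun k => b * (m - INR k) * (m + INR k + 1))).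
  - intros k. apply Rgt_not_eq. pose proof (pos_INR k). pose proof (Rabs_pos b).
    apply Rmult_lt_0_compat; lra.
  - intros k. pose proof (falling_moment_rec b c hbc m k) as recm.
    pose proof (falling_moment_rec b c hbc (- m - 1) k) as recm'.
    replace (b * (- m - 1 - INR k) * (- m - 1 + INR k + 1))
      with (b * (m - INR k) * (m + INR k + 1)) in recm' by ring.
    rewrite !Rmult_minus_distr_l. lra.
  - unfold falling_moment. cbn [falling].
    replace (- (- m - 1) - 1) with m by ring. rewrite cos_moment0_reflect. ring.
  - unfold falling_moment. cbn [falling]. simpl INR.
    replace (- (- m - 1) - 1) with m by ring.
    pose proof (cos_moment0_succ b c hbc (- m - 1)) as succ_m'.
    pose proof (cos_moment0_succ b c hbc m) as succ_m.
    pose proof (cos_moment0_rec b c hbc (m - 1)) as rec0.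
    replace (- m - 1 + 1) with (- (m - 1) - 1) in succ_m' by ring.
    replace (m - 1 + 1) with m in rec0 by ring. replace (m - 1 + 2) with (m + 1) in rec0 by ring.
    rewrite hyp, !cos_moment0_reflect in *. rewrite succ_m', succ_m in rec0.
    lra.
Qed.

End ThetaMoments.

Theorem mainTheorem3 (a n : R) (i : nat) (ha : Rabs a < 1) :
  gbinom n i * RInt (fun phi => cos (INR i * phi) / Rpower (Theta a phi) (n + 1)) 0 PI
  = gbinom (- n - 1) i * RInt (fun phi => Rpower (Theta a phi) n * cos (INR i * phi)) 0 PI.
Proof.
  set (b := 2 * a / (1 - a ^ 2)). set (c := (1 + a ^ 2) / (1 - a ^ 2)).
  assert (lhs : RInt (fun phi => cos (INR i * phi) / Rpower (Theta a phi) (n + 1)) 0 PI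
                = cos_moment b c (- n - 1) i).
  { apply RInt_ext. intros x _. unfold weighted_cos. rewrite (Theta_eq_cos_weight a ha).
    replace (- n - 1) with (- (n + 1)) by ring. rewrite Rpower_Ropp. apply Rmult_comm. }
  assert (rhs : RInt (fun phi => Rpower (Theta a phi) n * cos (INR i * phi)) 0 PI = cos_moment b c n i).
  { apply RInt_ext. intros x _. unfold weighted_cos. rewrite (Theta_eq_cos_weight a ha). reflexivity. }
  pose proof (falling_moment_reflect a ha n i) as key.
  unfold falling_moment in key. replace (- (- n - 1) - 1) with n in key by ring.
  rewrite lhs, rhs. unfold gbinom, Rdiv.
  rewrite !(Rmult_comm (falling _ i)), !Rmult_assoc. f_equal. exact key.
Qed.
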